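(* Let $n\ge 4$, $\nu=2^n$, $\sigma^2>0$ and $0<\rho<1$. Suppose the vector of treatment effects $\tau=(\tau(i))_{i\in\Omega}$ is a zero-mean Gaussian random vector with $\operatorname{cov}(\tau(i),\tau(i'))=\sigma^2\rho^{\,\#\{k:\ i_k\neq i'_k\}}$ for all $i,i'\in\Omega$ (equivalently $\operatorname{cov}(\tau)=\sigma^2\mathbf R^{\otimes n}$ in lexicographic order, where $\mathbf R$ is the $2\times 2$ matrix with diagonal entries $1$ and off-diagonal entries $\rho$). Then for every $s\in\{0,1,2\}$, every $1\le l\le n-2$ and every $j=(j_1,\dots,j_n)\in\Omega_{sl}$, $$\operatorname{var}\big(\beta(j_1\cdots j_n)\big)=\sigma^2\nu^{-1}(1+\rho)^{\,n-l-s}(1-\rho)^{\,l}.$$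
   Context: Let $\Omega=\{0,1\}^n$. The conditional effects are defined from treatment effects $\tau(i)$, $i\in\Omega$, by $$\beta(j)=\nu^{-1}\sum_{i\in\Omega} g(j_1,j_2;i_1,i_2)\,g(j_3,j_4;i_3,i_4)\prod_{k=5}^{n}(-1)^{j_k i_k}\,\tau(i),\qquad j\in\Omega,$$ where $g(0,b;a,a')=(-1)^{b a'}$ and $g(1,b;a,a')=\sqrt2\,(-1)^{a}\,\mathbf 1[a'=b]$ for $a,a',b\in\{0,1\}$. (Here $F_1,F_2$ and $F_3,F_4$ are two pairs of conditional/conditioned factors: effects involving $F_1$ are defined conditionally on each level of $F_2$, and those involving $F_3$ conditionally on each level of $F_4$.) For $1\le l\le n-2$ define $\Omega_{0l}=\{j: j_1=j_3=0,\ \text{exactly } l \text{ of } j_2,j_4,j_5,\dots,j_n \text{ equal } 1\}$; $\Omega_{1l}=\{j: j_1=1,\ j_2\in\{0,1\},\ j_3=0,\ \text{exactly } l-1 \text{ of } j_4,\dots,j_n \text{ equal }1\}\cup\{j: j_3=1,\ j_4\in\{0,1\},\ j_1=0,\ \text{exactly } l-1 \text{ of } j_2,j_5,\dots,j_n \text{ equal }1\}$; $\Omega_{2l}=\{j: j_1=j_3=1,\ j_2,j_4\in\{0,1\},\ \text{exactly } l-2 \text{ of } j_5,\dots,j_n \text{ equal }1\}$ (empty when $l=1$). *)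

From HB Require Import structures.
From mathcomp Require Import all_boot all_order all_algebra.
Set Implicit Arguments. Unset Strict Implicit. Unset Printing Implicit Defensive.
Import Order.TTheory GRing.Theory Num.Theory.
Local Open Scope ring_scope.

(* Omega = {0,1}^n is n.-tuple bool; the paper's coordinate j_k (k = 1..n)
   is the 0-based entry  bit j (k-1). *)
Definition bit (n : nat) (j : n.-tuple bool) (k : nat) : bool := nth false j k.

Definition gfun (R : rcfType) (b1 b2 a a' : bool) : R :=
  if b1 then Num.sqrt 2 * (-1) ^+ a * (a' == b2)%:R
  else (-1) ^+ (b2 && a').

(* coefficient of tau(i) in beta(j) *)
Definition coef (R : rcfType) (n : nat) (j i : n.-tuple bool) : R :=
  ((2 ^ n)%N%:R)^-1
  * gfun R (bit j 0) (bit j 1) (bit i 0) (bit i 1)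
  * gfun R (bit j 2) (bit j 3) (bit i 2) (bit i 3)
  * \prod_(4 <= k < n) (-1) ^+ (bit j k && bit i k).

Definition var_beta (R : rcfType) (n : nat)
  (cov : n.-tuple bool -> n.-tuple bool -> R) (j : n.-tuple bool) : R :=
  \sum_(i : n.-tuple bool) \sum_(i' : n.-tuple bool)
     coef R j i * coef R j i' * cov i i'.

Definition hamming (n : nat) (i i' : n.-tuple bool) : nat :=
  (\sum_(k < n) (bit i k != bit i' k))%N.

Definition ones (n : nat) (j : n.-tuple bool) (ks : seq nat) : nat :=
  count (bit j) ks.

Definition tailpos (n : nat) : seq nat := iota 4 (n - 4).

Definition Omega (n s l : nat) (j : n.-tuple bool) : bool :=
  match s with
  | 0 => [&& ~~ bit j 0, ~~ bit j 2 & ones j (1 :: 3 :: tailpos n) == l]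
  | 1 => [&& bit j 0, ~~ bit j 2 & (ones j (3 :: tailpos n)).+1 == l]
         || [&& bit j 2, ~~ bit j 0 & (ones j (1 :: tailpos n)).+1 == l]
  | _ => [&& bit j 0, bit j 2 & (ones j (tailpos n)).+2 == l]
  end.

From HB Require Import structures.
From mathcomp Require Import all_boot all_order all_algebra.
From mathcomp Require Import ring zify.
Import Order.TTheory GRing.Theory Num.Theory.
Local Open Scope ring_scope.
Set Implicit Arguments. Unset Strict Implicit.

(* The coefficient of tau(i) in beta(j) is a product over the coordinates
   (the pairs (F1,F2) and (F3,F4) split as a factor in i_1 times a factor in
   i_2), and cov(tau) = sigma^2 R^{(x)n} is a tensor product; hence
   var beta(j) = sigma^2 nu^-2 prod_k f_k^T R f_k.  An ordinary coordinate
   gives 2(1 + rho) or 2(1 - rho) according to j_k.  A conditional pair with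
   j_1 = 1 gives 4(1 - rho) * 1 (a contrast in i_1 times an indicator in i_2),
   and with j_1 = 0 it gives two ordinary factors.  Collecting exponents, the
   power of (1 - rho) is l and that of (1 + rho) is n - l - s on Omega_sl. *)

Section TupleSums.
Variables (R : comPzSemiRingType) (T : finType) (x0 : T).

Lemma sum_tupleS m (F : m.+1.-tuple T -> R) :
  \sum_(t : m.+1.-tuple T) F t = \sum_(a : T) \sum_(t : m.-tuple T) F [tuple of a :: t].
Proof.
rewrite pair_big /= (reindex (fun p : T * m.-tuple T => [tuple of p.1 :: p.2])) //=.
exists (fun t : m.+1.-tuple T => (thead t, [tuple of behead t])).
  by move=> [a t] _; rewrite theadE; congr pair; apply: val_inj.
by move=> t _; rewrite [in RHS](tuple_eta t); apply: val_inj.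
Qed.

Lemma sum_tuple_prod m (F : nat -> T -> R) :
  \sum_(t : m.-tuple T) \prod_(k < m) F k (nth x0 t k) = \prod_(k < m) \sum_(a : T) F k a.
Proof.
elim: m F => [|m IHm] F.
  by under eq_bigr do rewrite big_ord0; rewrite big_ord0 sumr_const card_tuple.
rewrite sum_tupleS big_ord_recl -(IHm (fun k => F k.+1)) mulr_suml.
apply: eq_bigr => a _; rewrite mulr_sumr.
by apply: eq_bigr => t _; rewrite big_ord_recl.
Qed.

Lemma sum2_tuple_prod m (F : nat -> T -> T -> R) :
  \sum_(t : m.-tuple T) \sum_(t' : m.-tuple T)
     \prod_(k < m) F k (nth x0 t k) (nth x0 t' k)
  = \prod_(k < m) \sum_(a : T) \sum_(a' : T) F k a a'.
Proof.
under eq_bigr => t _ do rewrite (sum_tuple_prod _ (fun k => F k (nth x0 t k))).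
exact: (sum_tuple_prod _ (fun k a => \sum_(a' : T) F k a a')).
Qed.

End TupleSums.

Lemma big_nat_first4 (R : Type) (idx : R) (op : Monoid.law idx) n (F : nat -> R) :
  (4 <= n)%N ->
  \big[op/idx]_(k < n) F k
  = op (op (op (op (F 0%N) (F 1%N)) (F 2%N)) (F 3%N)) (\big[op/idx]_(4 <= k < n) F k).
Proof.
move=> le4n; rewrite -(big_mkord xpredT) (@big_cat_nat _ _ _ 4) //=.
by rewrite !big_nat_recl // big_geq // Monoid.mulm1 !Monoid.mulmA.
Qed.

Lemma prodr_if (R : comPzSemiRingType) (I : Type) (r : seq I) (P : pred I) (x y : R) :
  \prod_(i <- r) (if P i then x else y) = x ^+ count P r * y ^+ count (predC P) r.
Proof.
elim: r => [|i r IHr]; first by rewrite big_nil mulr1.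
by rewrite big_cons IHr /=; case: (P i); rewrite /= !exprS; ring.
Qed.

Section Factors.
Variable R : rcfType.

Definition gfun_l (b1 a : bool) : R := if b1 then Num.sqrt 2 * (-1) ^+ a else 1.

Definition gfun_r (b1 b2 a' : bool) : R :=
  if b1 then (a' == b2)%:R else (-1) ^+ (b2 && a').

Lemma gfunE b1 b2 a a' : gfun R b1 b2 a a' = gfun_l b1 a * gfun_r b1 b2 a'.
Proof. by rewrite /gfun /gfun_l /gfun_r; case: b1; rewrite ?mul1r. Qed.

Definition coef_factor n (j : n.-tuple bool) (k : nat) : bool -> R :=
  match k with
  | 0 => gfun_l (bit j 0)
  | 1 => gfun_r (bit j 0) (bit j 1)
  | 2 => gfun_l (bit j 2)
  | 3 => gfun_r (bit j 2) (bit j 3)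
  | _ => fun a => (-1) ^+ (bit j k && a)
  end.

Lemma coef_prodE n (j i : n.-tuple bool) : (4 <= n)%N ->
  coef R j i = ((2 ^ n)%N%:R)^-1 * \prod_(k < n) coef_factor j k (bit i k).
Proof.
move=> le4n; rewrite (big_nat_first4 _ (fun k => coef_factor j k (bit i k)) le4n).
rewrite /coef !gfunE !mulrA.
by congr (_ * _); apply: eq_big_nat => -[|[|[|[|k]]]].
Qed.

Variable rho : R.

(* [qform rho f] is f^T R f for R = [[1, rho], [rho, 1]]. *)
Definition qform (f : bool -> R) : R :=
  \sum_(a : bool) \sum_(a' : bool) f a * f a' * rho ^+ (a != a').

Lemma qform_sign b :
  qform (fun a => (-1) ^+ (b && a)) = 2 * (if b then 1 - rho else 1 + rho).
Proof. by rewrite /qform !big_bool; case: b => /=; ring. Qed.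

Definition pair_zeros (b1 b2 : bool) : nat := if b1 then 0 else (~~ b2).+1.
Definition pair_ones (b1 b2 : bool) : nat := if b1 then 1 else b2.

Lemma qform_pair b1 b2 :
  qform (gfun_l b1) * qform (gfun_r b1 b2)
  = 2 ^+ 2 * (1 + rho) ^+ pair_zeros b1 b2 * (1 - rho) ^+ pair_ones b1 b2.
Proof.
case: b1; last first.
  by rewrite [qform (gfun_r _ _)]qform_sign /qform !big_bool; case: b2 => /=; ring.
have sqrt2_sq : Num.sqrt (2 : R) ^+ 2 = 2 by rewrite sqr_sqrtr ?ler0n.
rewrite /qform !big_bool /=; case: b2 => /=; ring: sqrt2_sq.
Qed.

End Factors.

Definition ones_exp n (j : n.-tuple bool) : nat :=
  pair_ones (bit j 0) (bit j 1) + pair_ones (bit j 2) (bit j 3) + ones j (tailpos n).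

Definition zeros_exp n (j : n.-tuple bool) : nat :=
  pair_zeros (bit j 0) (bit j 1) + pair_zeros (bit j 2) (bit j 3)
  + count (predC (bit j)) (tailpos n).

Lemma Omega_exps n s l (j : n.-tuple bool) : (4 <= n)%N -> (s <= 2)%N ->
  Omega s l j -> ones_exp j = l /\ zeros_exp j = (n - l - s)%N.
Proof.
move=> le4n le_s2; have := count_predC (bit j) (tailpos n).
rewrite size_iota /Omega /ones_exp /zeros_exp /pair_ones /pair_zeros /ones.
case: s le_s2 => [|[|[|//]]] _ /=;
  case: (bit j 0); case: (bit j 1); case: (bit j 2); case: (bit j 3) => /=; lia.
Qed.

Section Variance.
Variables (R : rcfType) (rho : R).

Lemma prod_qform n (j : n.-tuple bool) : (4 <= n)%N ->
  \prod_(k < n) qform rho (coef_factor R j k)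
  = 2 ^+ n * (1 + rho) ^+ zeros_exp j * (1 - rho) ^+ ones_exp j.
Proof.
move=> le4n; rewrite (big_nat_first4 _ (fun k => qform rho (coef_factor R j k)) le4n) /=.
rewrite -!mulrA mulrA qform_pair (mulrA (qform _ _)) qform_pair.
rewrite (eq_big_nat _ _ (F2 := fun k => 2 * (if bit j k then 1 - rho else 1 + rho)));
  last by move=> [|[|[|[|k]]]] //= _; rewrite qform_sign.
rewrite big_split /= prodr_const_nat prodr_if.
rewrite /zeros_exp /ones_exp /ones -[in 2 ^+ n](subnKC le4n) !exprD; ring.
Qed.

Lemma var_betaE n (cov : n.-tuple bool -> n.-tuple bool -> R) (sigma2 : R) j :
  (4 <= n)%N -> (forall i i', cov i i' = sigma2 * rho ^+ hamming i i') ->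
  var_beta cov j
  = sigma2 * ((2 ^ n)%N%:R)^-1 * ((2 ^ n)%N%:R)^-1
    * \prod_(k < n) qform rho (coef_factor R j k).
Proof.
move=> le4n covE; rewrite /qform -(sum2_tuple_prod false n
  (fun k a a' => coef_factor R j k a * coef_factor R j k a' * rho ^+ (a != a'))).
rewrite /var_beta mulr_sumr; apply: eq_bigr => i _.
rewrite mulr_sumr; apply: eq_bigr => i' _.
by rewrite covE !coef_prodE // /hamming expr_sum !big_split /=; ring.
Qed.

End Variance.

Theorem theorem1 (R : rcfType) (n : nat) (sigma2 rho : R)
  (cov : n.-tuple bool -> n.-tuple bool -> R) :
  (4 <= n)%N -> 0 < sigma2 -> 0 < rho -> rho < 1 ->
  (forall i i' : n.-tuple bool, cov i i' = sigma2 * rho ^+ hamming i i') ->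
  forall (s l : nat) (j : n.-tuple bool),
    (s <= 2)%N -> (1 <= l)%N -> (l <= n - 2)%N -> Omega s l j ->
    var_beta cov j
    = sigma2 * ((2 ^ n)%N%:R)^-1 * (1 + rho) ^+ (n - l - s) * (1 - rho) ^+ l.
Proof.
move=> le4n _ _ _ covE s l j le_s2 _ _ j_in_Omega.
have [<- <-] := Omega_exps le4n le_s2 j_in_Omega.
rewrite (var_betaE j le4n covE) prod_qform // natrX.
have pow2_neq0 : (2 : R) ^+ n != 0 by rewrite expf_neq0 ?pnatr_eq0.
by field.
Qed.
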